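(* Let $\mathbf{V}\in\mathbb{R}^{N\times N}$ with $\mathbf{1}_N^\top\mathbf{V}=\mathbf{1}_N^\top$ and $\mathbf{V}\boldsymbol\mu=\boldsymbol\mu$, and $\mathbf{A}\in\mathbb{R}^{T\times N}$ with $\mathbf{1}_T^\top\mathbf{A}=\mathbf{1}_N^\top$. Then $$\mathbb{E}\hat\nabla_{\mathbf{V}}l=\|\mathbf{A}\|_\mu^2(\mathbf{V}-\boldsymbol\mu\mathbf{1}^\top)-\langle\mathbf{Q},\mathbf{A}\rangle_\mu(\mathbf{P}-\boldsymbol\mu\mathbf{1}^\top),$$ and for each $k\in[N]$, $$\mathbb{E}\hat\nabla_{\mathbf{a}^{(k)}}l=(\|\mathbf{V}\|_\mu^2-\|\boldsymbol\mu\|^2)\Big(\mathbf{a}^{(k)}-\frac{\mathbf{1}}{T}\Big)-(\langle\mathbf{V},\mathbf{P}\rangle_\mu-\|\boldsymbol\mu\|^2)\Big(\mathbf{q}^{(k)}-\frac{\mathbf{1}}{T}\Big).$$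
   Context: Let $\mathbf{P}\in\mathbb{R}^{N\times N}$ have nonnegative entries with columns summing to $1$, and let $\boldsymbol\mu\in\mathbb{R}^N$ be a probability vector with positive entries and $\mathbf{P}\boldsymbol\mu=\boldsymbol\mu$. Let $\mathbf{Q}=(\mathbf{q}^{(1)},\dots,\mathbf{q}^{(N)})\in\mathbb{R}^{T\times N}$ with each $\mathbf{q}^{(k)}$ a probability vector. Data: $x_1,\dots,x_{T+1}$ i.i.d. with law $\boldsymbol\mu$, and $x_o$ with $\Pr(x_o=n\mid x_{T+1}=k,x_1,\dots,x_T)=\sum_tq^{(k)}_tP_{n,x_t}$; $\mathbf{X}=(\mathbf{e}_{x_1},\dots,\mathbf{e}_{x_T})$. Loss $l=\frac12\|\mathbf{e}_{x_o}-\mathbf{V}\mathbf{X}\mathbf{A}\mathbf{e}_{x_{T+1}}\|^2$, $\mathbf{a}^{(k)}$ the $k$-th column of $\mathbf{A}$. Preconditioned gradients: $\hat\nabla_{\mathbf{V}}l=(\mathbf{I}_N-\mathbf{1}_N\mathbf{1}_N^\top/N)(\nabla_{\mathbf{V}}l)\operatorname{diag}(1/\boldsymbol\mu)(\mathbf{I}_N-\boldsymbol\mu\boldsymbol\mu^\top/\|\boldsymbol\mu\|^2)$ and $\hat\nabla_{\mathbf{a}^{(k)}}l=\frac{1}{\mu_k}(\mathbf{I}_T-\mathbf{1}_T\mathbf{1}_T^\top/T)\nabla_{\mathbf{a}^{(k)}}l$. $\mathbb{E}$ is expectation over the data with $\mathbf{V},\mathbf{A}$ fixed. $\langle\mathbf{M},\mathbf{M}'\rangle_\mu=\operatorname{Tr}(\mathbf{M}\operatorname{diag}(\boldsymbol\mu)\mathbf{M}'^\top)$,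 $\|\mathbf{M}\|_\mu^2=\langle\mathbf{M},\mathbf{M}\rangle_\mu$; $\|\boldsymbol\mu\|$ Euclidean. *)

From HB Require Import structures.
From mathcomp Require Import all_boot all_order all_algebra.
Set Implicit Arguments. Unset Strict Implicit. Unset Printing Implicit Defensive.
Import Order.TTheory GRing.Theory Num.Theory.
Local Open Scope ring_scope.

Section Defs.
Variable R : realFieldType.

Definition ones (n : nat) : 'cV[R]_n := const_mx 1.

Definition ecol (n : nat) (i : 'I_n) : 'cV[R]_n := delta_mx i 0.

(* X = (e_{x_1}, ..., e_{x_T}) for a context xs : t |-> x_t *)
Definition Xmat (N T : nat) (xs : {ffun 'I_T -> 'I_N}) : 'M[R]_(N, T) :=
  \matrix_(i < N, t < T) (xs t == i)%:R.

(* residual e_{x_o} - V X A e_{x_{T+1}}, with k = x_{T+1}, o = x_o *)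
Definition resid (N T : nat) (V : 'M[R]_N) (A : 'M[R]_(T, N))
  (xs : {ffun 'I_T -> 'I_N}) (k o : 'I_N) : 'cV[R]_N :=
  ecol o - V *m Xmat xs *m col k A.

Definition loss (N T : nat) (V : 'M[R]_N) (A : 'M[R]_(T, N))
  (xs : {ffun 'I_T -> 'I_N}) (k o : 'I_N) : R :=
  2^-1 * \sum_i (resid V A xs k o i 0) ^+ 2.

Definition gradV (N T : nat) (V : 'M[R]_N) (A : 'M[R]_(T, N))
  (xs : {ffun 'I_T -> 'I_N}) (k o : 'I_N) : 'M[R]_N :=
  - (resid V A xs k o *m (Xmat xs *m col k A)^T).

(* gradient of loss w.r.t. column a^(j) of A: the loss only involves column
   k = x_{T+1}, so it is -(V X)^T (e_o - V X a^(k)) if j = k and 0 otherwise *)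
Definition grada (N T : nat) (V : 'M[R]_N) (A : 'M[R]_(T, N))
  (xs : {ffun 'I_T -> 'I_N}) (k o : 'I_N) (j : 'I_N) : 'cV[R]_T :=
  if k == j then - ((V *m Xmat xs)^T *m resid V A xs k o) else 0.

Definition sqnorm (n : nat) (v : 'cV[R]_n) : R := \sum_i v i 0 ^+ 2.

Definition precV (N : nat) (mu : 'cV[R]_N) (G : 'M[R]_N) : 'M[R]_N :=
  (1%:M - (N%:R)^-1 *: (ones N *m (ones N)^T)) *m G
  *m diag_mx (\row_i (mu i 0)^-1)
  *m (1%:M - (sqnorm mu)^-1 *: (mu *m mu^T)).

Definition preca (N T : nat) (mu : 'cV[R]_N) (k : 'I_N) (g : 'cV[R]_T)
  : 'cV[R]_T :=
  (mu k 0)^-1 *: ((1%:M - (T%:R)^-1 *: (ones T *m (ones T)^T)) *m g).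

(* joint probability of (x_1..x_T, x_{T+1} = k, x_o = o) *)
Definition dprob (N T : nat) (P : 'M[R]_N) (mu : 'cV[R]_N) (Q : 'M[R]_(T, N))
  (xs : {ffun 'I_T -> 'I_N}) (k o : 'I_N) : R :=
  (\prod_t mu (xs t) 0) * mu k 0 * (\sum_t Q t k * P o (xs t)).

Definition Expect (N T m n : nat) (P : 'M[R]_N) (mu : 'cV[R]_N)
  (Q : 'M[R]_(T, N))
  (F : {ffun 'I_T -> 'I_N} -> 'I_N -> 'I_N -> 'M[R]_(m, n)) : 'M[R]_(m, n) :=
  \sum_(xs : {ffun 'I_T -> 'I_N}) \sum_(k < N) \sum_(o < N)
     dprob P mu Q xs k o *: F xs k o.

Definition mu_ip (m N : nat) (mu : 'cV[R]_N) (M M' : 'M[R]_(m, N)) : R :=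
  \tr (M *m diag_mx mu^T *m M'^T).

End Defs.

(* Summing out x_o is harmless because the loss gradients are
   affine in e_{x_o}: it replaces e_{x_o} by P X q^(k).  What remains are
   moments of X under the i.i.d. law mu of x_1, ..., x_T, and these all come
   from E[e_{x_t} e_{x_s}^T] = diag mu if t = s and mu mu^T otherwise.  This
   gives E[X B X^T] and E[X^T M X] in closed form.  With V mu = P mu = mu the
   mu mu^T contributions cancel, leaving multiples of (V - mu 1^T) diag mu and
   (P - mu 1^T) diag mu.  The preconditioners are linear, and they fix the
   centered matrices V - mu 1^T and P - mu 1^T, which are killed by 1^T on the
   left and by mu on the right. *)

From HB Require Import structures.
From mathcomp Require Import all_boot all_order all_algebra ring.
Set Implicit Arguments. Unset Strict Implicit. Unset Printing Implicit Defensive.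
Import Order.TTheory GRing.Theory Num.Theory.
Local Open Scope ring_scope.

Lemma sum_mul_eq_nat (R : pzSemiRingType) n (x : 'I_n) (f : 'I_n -> R) :
  \sum_a f a * (x == a)%:R = f x.
Proof.
rewrite (bigD1 x) //= eqxx mulr1 big1 ?addr0 // => a.
by rewrite eq_sym => /negbTE ->; rewrite mulr0.
Qed.

Lemma prod_if_eq1 (R : pzSemiRingType) n (t : 'I_n) (F : 'I_n -> R) :
  \prod_u (if u == t then F u else 1) = F t.
Proof. by rewrite -big_mkcond big_pred1_eq. Qed.

Section IidSums.
Variables (R : comPzRingType) (N T : nat) (m : 'I_N -> R).
Hypothesis m_sum1 : \sum_i m i = 1.

Lemma sum_ffun_prod_mul (g : 'I_T -> 'I_N -> R) :
  \sum_(xs : {ffun 'I_T -> 'I_N}) (\prod_u m (xs u)) * \prod_u g u (xs u)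
  = \prod_u \sum_i m i * g u i.
Proof. by rewrite bigA_distr_bigA; apply: eq_bigr => xs _; rewrite -big_split. Qed.

Lemma sum_mean_if (b : bool) (f : 'I_N -> R) :
  \sum_i m i * (if b then f i else 1) = if b then \sum_i m i * f i else 1.
Proof. by case: b; under eq_bigr do rewrite ?mulr1. Qed.

Lemma iid_mean_coord (t : 'I_T) (f : 'I_N -> R) :
  \sum_(xs : {ffun 'I_T -> 'I_N}) (\prod_u m (xs u)) * f (xs t) = \sum_i m i * f i.
Proof.
transitivity (\sum_(xs : {ffun 'I_T -> 'I_N})
    (\prod_u m (xs u)) * \prod_u (if u == t then f (xs u) else 1)).
  by apply: eq_bigr => xs _; rewrite prod_if_eq1.
rewrite (sum_ffun_prod_mul (fun u i => if u == t then f i else 1)).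
by under eq_bigr do rewrite sum_mean_if; rewrite prod_if_eq1.
Qed.

Lemma iid_mean_coord2 (t s : 'I_T) (f h : 'I_N -> R) : t != s ->
  \sum_(xs : {ffun 'I_T -> 'I_N}) (\prod_u m (xs u)) * (f (xs t) * h (xs s))
  = (\sum_i m i * f i) * (\sum_i m i * h i).
Proof.
move=> /negbTE ts.
pose g u i := (if u == t then f i else 1) * (if u == s then h i else 1).
transitivity (\sum_(xs : {ffun 'I_T -> 'I_N}) (\prod_u m (xs u)) * \prod_u g u (xs u)).
  by apply: eq_bigr => xs _; rewrite big_split /= !prod_if_eq1.
rewrite sum_ffun_prod_mul -(prod_if_eq1 t (fun=> \sum_i m i * f i)).
rewrite -(prod_if_eq1 s (fun=> \sum_i m i * h i)) -big_split /=.
apply: eq_bigr => u _; rewrite /g.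
case: (eqVneq u t) => [-> | _].
  by rewrite ts mulr1; under eq_bigr do rewrite mulr1.
by rewrite mul1r; under eq_bigr do rewrite mul1r; rewrite sum_mean_if.
Qed.

Lemma iid_mean_pair (t s : 'I_T) (h : 'I_N -> 'I_N -> R) :
  \sum_(xs : {ffun 'I_T -> 'I_N}) (\prod_u m (xs u)) * h (xs t) (xs s)
  = if t == s then \sum_i m i * h i i else \sum_i m i * \sum_j m j * h i j.
Proof.
case: eqVneq => [<- | ts]; first exact: (iid_mean_coord t (fun i => h i i)).
transitivity (\sum_i \sum_(xs : {ffun 'I_T -> 'I_N})
    (\prod_u m (xs u)) * ((xs t == i)%:R * h i (xs s))).
  rewrite exchange_big /=; apply: eq_bigr => xs _.
  rewrite -mulr_sumr; congr (_ * _).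
  by under eq_bigr do rewrite mulrC; rewrite sum_mul_eq_nat.
apply: eq_bigr => i _; rewrite (iid_mean_coord2 (fun a => (a == i)%:R) (h i) ts).
by under eq_bigr do rewrite eq_sym; rewrite sum_mul_eq_nat.
Qed.

End IidSums.

Lemma ones_tr_mulmxE (R : realFieldType) m n (M : 'M[R]_(m, n)) j :
  ((ones R m)^T *m M) 0 j = \sum_i M i j.
Proof. by rewrite mxE; apply: eq_bigr => i _; rewrite !mxE mul1r. Qed.

Lemma ones_tr_mulmx_sum1 (R : realFieldType) n (v : 'cV[R]_n) :
  \sum_i v i 0 = 1 -> (ones R n)^T *m v = 1%:M.
Proof. by move=> v1; apply/matrixP => i j; rewrite !ord1 ones_tr_mulmxE v1 mxE. Qed.

Lemma ones_tr_mul_diag (R : realFieldType) n (mu : 'cV[R]_n) :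
  (ones R n)^T *m diag_mx mu^T = mu^T.
Proof. by rewrite mul_mx_diag; apply/matrixP => i j; rewrite !mxE mul1r (ord1 i). Qed.

Section Centered.
Variables (R : realFieldType) (N : nat) (mu : 'cV[R]_N) (M : 'M[R]_N).
Hypothesis mu_sum1 : \sum_i mu i 0 = 1.

Lemma centered_mul_mu : M *m mu = mu -> (M - mu *m (ones R N)^T) *m mu = 0.
Proof.
by move=> Mmu; rewrite mulmxBl Mmu -mulmxA ones_tr_mulmx_sum1 // mulmx1 subrr.
Qed.

Lemma ones_tr_mul_centered :
  (ones R N)^T *m M = (ones R N)^T -> (ones R N)^T *m (M - mu *m (ones R N)^T) = 0.
Proof. by move=> oM; rewrite mulmxBr oM mulmxA ones_tr_mulmx_sum1 // mul1mx subrr. Qed.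

End Centered.

Lemma mulmx_XmatE (R : realFieldType) n N T (M : 'M[R]_(n, N))
    (xs : {ffun 'I_T -> 'I_N}) i t :
  (M *m Xmat R xs) i t = M i (xs t).
Proof. by rewrite mxE; under eq_bigr do rewrite mxE; rewrite sum_mul_eq_nat. Qed.

Lemma quad_formE (R : comPzRingType) N (mu : 'cV[R]_N) (M : 'M[R]_N) :
  (mu^T *m M *m mu) 0 0 = \sum_i mu i 0 * \sum_j mu j 0 * M i j.
Proof.
rewrite mxE; under eq_bigr do rewrite mxE mulr_suml.
rewrite exchange_big; apply: eq_bigr => i _; rewrite mulr_sumr.
by apply: eq_bigr => j _; rewrite !mxE; ring.
Qed.

Lemma sum2_if_eq (R : comPzRingType) T (a b : 'I_T -> R) (c d : R) :
  \sum_t a t = 1 -> \sum_t b t = 1 ->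
  \sum_t \sum_s a t * b s * (if t == s then c else d)
  = d + (\sum_t a t * b t) * (c - d).
Proof.
move=> a1 b1.
have split_if t s : a t * b s * (if t == s then c else d)
    = a t * b s * d + a t * b s * (c - d) * (t == s)%:R.
  by case: eqP => _; rewrite ?mulr1 ?mulr0 ?addr0 //; ring.
under eq_bigr do under eq_bigr do rewrite split_if.
under eq_bigr do rewrite big_split /= sum_mul_eq_nat -big_distrl -big_distrr /= b1.
by rewrite big_split /= -big_distrl -big_distrl /= a1 !mul1r -big_distrl.
Qed.

Section XmatMoments.
Variables (R : realFieldType) (N T : nat) (mu : 'cV[R]_N).
Hypothesis mu_sum1 : \sum_i mu i 0 = 1.
Local Notation pi xs := (\prod_u mu (xs u) 0).

Lemma Xmat_outer_mean (a b : 'cV[R]_T) :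
  \sum_t a t 0 = 1 -> \sum_t b t 0 = 1 ->
  \sum_(xs : {ffun 'I_T -> 'I_N}) pi xs *: (Xmat R xs *m a *m (Xmat R xs *m b)^T)
  = mu *m mu^T + (\sum_t a t 0 * b t 0) *: (diag_mx mu^T - mu *m mu^T).
Proof.
move=> a1 b1; apply/matrixP => i j; rewrite summxE.
have pair_mean t s : \sum_(xs : {ffun 'I_T -> 'I_N})
    pi xs * ((xs t == i)%:R * (xs s == j)%:R)
    = if t == s then mu i 0 * (i == j)%:R else mu i 0 * mu j 0.
  rewrite (iid_mean_pair mu_sum1 t s
    (fun p q => (p == i)%:R * (q == j)%:R)).
  case: (t == s).
    under eq_bigr => p _ do rewrite mulrA mulrAC [p == i]eq_sym.
    by rewrite sum_mul_eq_nat.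
  under eq_bigr => p _ do under eq_bigr => q _ do rewrite mulrCA [q == j]eq_sym.
  under eq_bigr => p _ do rewrite -mulr_sumr sum_mul_eq_nat mulrA mulrAC [p == i]eq_sym.
  by rewrite sum_mul_eq_nat.
have entry xs : (Xmat R xs *m a *m (Xmat R xs *m b)^T) i j
    = \sum_t \sum_s a t 0 * b s 0 * ((xs t == i)%:R * (xs s == j)%:R).
  rewrite !mxE big_ord1 !mxE big_distrl; apply: eq_bigr => t _ /=.
  by rewrite big_distrr; apply: eq_bigr => s _; rewrite /= !mxE; ring.
transitivity (\sum_t \sum_s a t 0 * b s 0 *
    (if t == s then mu i 0 * (i == j)%:R else mu i 0 * mu j 0)).
  under eq_bigr => xs _ do rewrite mxE entry mulr_sumr.
  rewrite exchange_big; apply: eq_bigr => t _.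
  under eq_bigr => xs _ do rewrite mulr_sumr.
  rewrite exchange_big; apply: eq_bigr => s _.
  by rewrite -pair_mean mulr_sumr; apply: eq_bigr => xs _; ring.
rewrite sum2_if_eq // !mxE big_ord1 !mxE -mulr_natr; ring.
Qed.

Lemma Xmat_gram_mean (M : 'M[R]_N) :
  \sum_(xs : {ffun 'I_T -> 'I_N}) pi xs *: ((Xmat R xs)^T *m M *m Xmat R xs)
  = (mu^T *m M *m mu) 0 0 *: (ones R T *m (ones R T)^T)
    + (\sum_i mu i 0 * M i i - (mu^T *m M *m mu) 0 0) *: 1%:M.
Proof.
apply/matrixP => t s; rewrite summxE quad_formE.
under eq_bigr do
  rewrite mxE mulmx_XmatE -[_ *m M]trmxK trmx_mul trmxK mxE mulmx_XmatE mxE.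
rewrite (iid_mean_pair mu_sum1 t s M) !mxE big_ord1 !mxE.
by case: eqP => _; rewrite ?mulr1 ?mulr0; ring.
Qed.

Lemma Xmat_outer_mean_stat (M : 'M[R]_N) (v a : 'cV[R]_T) :
  M *m mu = mu -> \sum_t v t 0 = 1 -> \sum_t a t 0 = 1 ->
  \sum_(xs : {ffun 'I_T -> 'I_N}) pi xs *: (M *m Xmat R xs *m v *m (Xmat R xs *m a)^T)
  = mu *m mu^T
    + (\sum_t v t 0 * a t 0) *: ((M - mu *m (ones R N)^T) *m diag_mx mu^T).
Proof.
move=> Mmu v1 a1.
transitivity (M *m \sum_(xs : {ffun 'I_T -> 'I_N})
    pi xs *: (Xmat R xs *m v *m (Xmat R xs *m a)^T)).
  by rewrite mulmx_sumr; apply: eq_bigr => xs _; rewrite -scalemxAr !mulmxA.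
rewrite Xmat_outer_mean // mulmxDr mulmxA Mmu -scalemxAr mulmxBr mulmxA Mmu.
by rewrite mulmxBl -mulmxA ones_tr_mul_diag.
Qed.

Lemma Xmat_gram_mean_mul (M : 'M[R]_N) (v : 'cV[R]_T) : \sum_t v t 0 = 1 ->
  \sum_(xs : {ffun 'I_T -> 'I_N}) pi xs *: ((Xmat R xs)^T *m M *m Xmat R xs *m v)
  = (mu^T *m M *m mu) 0 0 *: ones R T
    + (\sum_i mu i 0 * M i i - (mu^T *m M *m mu) 0 0) *: v.
Proof.
move=> v1; transitivity ((\sum_(xs : {ffun 'I_T -> 'I_N})
    pi xs *: ((Xmat R xs)^T *m M *m Xmat R xs)) *m v).
  by rewrite mulmx_suml; apply: eq_bigr => xs _; rewrite scalemxAl.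
rewrite Xmat_gram_mean mulmxDl -!scalemxAl -[ones R T *m _ *m v]mulmxA.
by rewrite ones_tr_mulmx_sum1 // mulmx1 mul1mx.
Qed.

End XmatMoments.

Section Data.
Variables (R : realFieldType) (N T : nat).
Variables (P : 'M[R]_N) (mu : 'cV[R]_N) (Q : 'M[R]_(T, N)).
Hypotheses (P1 : forall j, \sum_i P i j = 1) (Q1 : forall k, \sum_t Q t k = 1).
Local Notation pi xs := (\prod_u mu (xs u) 0).

Lemma sum_dprob (xs : {ffun 'I_T -> 'I_N}) k :
  \sum_o dprob P mu Q xs k o = pi xs * mu k 0.
Proof.
rewrite /dprob -big_distrr /= exchange_big /=.
by under [X in _ * X]eq_bigr do rewrite -mulr_sumr P1 mulr1; rewrite Q1 mulr1.
Qed.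

Lemma sum_dprob_ecol (xs : {ffun 'I_T -> 'I_N}) k :
  \sum_o dprob P mu Q xs k o *: ecol R o
  = (pi xs * mu k 0) *: (P *m Xmat R xs *m col k Q).
Proof.
apply/matrixP => i j; rewrite (ord1 j) summxE.
under [LHS]eq_bigr do rewrite /ecol !mxE eqxx andbT.
rewrite sum_mul_eq_nat /dprob !mxE; congr (_ * _).
by apply: eq_bigr => t _; rewrite mulmx_XmatE !mxE mulrC.
Qed.

Lemma sum_dprob_resid (V : 'M[R]_N) (A : 'M[R]_(T, N)) xs k :
  \sum_o dprob P mu Q xs k o *: resid V A xs k o
  = (pi xs * mu k 0) *: (P *m Xmat R xs *m col k Q - V *m Xmat R xs *m col k A).
Proof.
under [LHS]eq_bigr do rewrite /resid scalerBr.
by rewrite sumrB sum_dprob_ecol -scaler_suml sum_dprob scalerBr.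
Qed.

Lemma Expect_sum_dprob m n
    (F : {ffun 'I_T -> 'I_N} -> 'I_N -> 'I_N -> 'M[R]_(m, n))
    (G : {ffun 'I_T -> 'I_N} -> 'I_N -> 'M[R]_(m, n)) :
  (forall xs k,
     \sum_o dprob P mu Q xs k o *: F xs k o = (pi xs * mu k 0) *: G xs k) ->
  Expect P mu Q F = \sum_k mu k 0 *: \sum_(xs : {ffun 'I_T -> 'I_N}) pi xs *: G xs k.
Proof.
move=> FG; rewrite /Expect exchange_big; apply: eq_bigr => k _ /=.
by rewrite scaler_sumr; apply: eq_bigr => xs _; rewrite FG scalerA mulrC.
Qed.

Lemma Expect_linear m n m' n' (f : 'M[R]_(m, n) -> 'M[R]_(m', n'))
    (F : {ffun 'I_T -> 'I_N} -> 'I_N -> 'I_N -> 'M[R]_(m, n)) :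
  linear f -> Expect P mu Q (fun xs k o => f (F xs k o)) = f (Expect P mu Q F).
Proof.
move=> f_lin.
have f0 : f 0 = 0.
  by have := f_lin 1 0 0; rewrite scaler0 addr0 scale1r -{1}[f 0]addr0 => /addrI <-.
have fD x y : f (x + y) = f x + f y by have := f_lin 1 x y; rewrite !scale1r.
have fZ c x : f (c *: x) = c *: f x by have := f_lin c x 0; rewrite f0 !addr0.
rewrite /Expect (big_morph f fD f0); apply: eq_bigr => xs _.
rewrite (big_morph f fD f0); apply: eq_bigr => k _.
by rewrite (big_morph f fD f0); apply: eq_bigr => o _; rewrite fZ.
Qed.

End Data.

Lemma sum_colE (R : realFieldType) m n (M : 'M[R]_(m, n)) k :
  \sum_i (col k M) i 0 = \sum_i M i k.
Proof. by apply: eq_bigr => i _; rewrite mxE. Qed.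

Lemma mu_ipE (R : realFieldType) m N (mu : 'cV[R]_N) (M M' : 'M[R]_(m, N)) :
  mu_ip mu M M' = \sum_k mu k 0 * \sum_t M t k * M' t k.
Proof.
rewrite /mu_ip /mxtrace; under eq_bigr do rewrite mxE.
rewrite exchange_big /=; apply: eq_bigr => k _; rewrite mulr_sumr.
by apply: eq_bigr => t _; rewrite mul_mx_diag !mxE; ring.
Qed.

Lemma mu_ip_trmx_mulE (R : realFieldType) m N (mu : 'cV[R]_N) (M M' : 'M[R]_(m, N)) :
  mu_ip mu M M' = \sum_i mu i 0 * (M^T *m M') i i.
Proof.
rewrite mu_ipE; apply: eq_bigr => i _; rewrite mxE.
by congr (_ * _); apply: eq_bigr => t _; rewrite mxE.
Qed.

Lemma sqnorm_stat (R : realFieldType) N (mu : 'cV[R]_N) (M M' : 'M[R]_N) :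
  M *m mu = mu -> M' *m mu = mu -> (mu^T *m (M^T *m M') *m mu) 0 0 = sqnorm mu.
Proof.
move=> Mmu M'mu; rewrite mulmxA -trmx_mul -mulmxA Mmu M'mu mxE.
by apply: eq_bigr => i _; rewrite mxE expr2.
Qed.

Lemma precV_linear (R : realFieldType) N (mu : 'cV[R]_N) : linear (precV mu).
Proof.
move=> c X Y; rewrite /precV -!mulmxA (mulmxDl (c *: X)) -scalemxAl.
by rewrite (mulmxDr _ (c *: _)) -scalemxAr.
Qed.

Lemma preca_linear (R : realFieldType) N T (mu : 'cV[R]_N) j :
  linear (@preca R N T mu j).
Proof. by move=> c g h; rewrite /preca mulmxDr -scalemxAr scalerDr !scalerA mulrC. Qed.

Lemma precV_centered (R : realFieldType) N (mu : 'cV[R]_N) (Y : 'M[R]_N) :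
  (forall i, mu i 0 != 0) -> (ones R N)^T *m Y = 0 -> Y *m mu = 0 ->
  precV mu (Y *m diag_mx mu^T) = Y.
Proof.
move=> mu_neq0 oY Ymu.
have D_inv : diag_mx mu^T *m diag_mx (\row_i (mu i 0)^-1) = 1%:M.
  rewrite mulmx_diag -diag_const_mx; congr diag_mx.
  by apply/rowP => i; rewrite !mxE mulfV.
rewrite /precV !mulmxA -(mulmxA _ (diag_mx mu^T)) D_inv mulmx1.
rewrite mulmxBl mul1mx -scalemxAl -mulmxA oY mulmx0 scaler0 subr0.
by rewrite mulmxBr mulmx1 -scalemxAr mulmxA Ymu mul0mx scaler0 subr0.
Qed.

Lemma preca_scale_mu (R : realFieldType) N T (mu : 'cV[R]_N) j (g : 'cV[R]_T) :
  mu j 0 != 0 ->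
  preca mu j (mu j 0 *: g) = (1%:M - T%:R^-1 *: (ones R T *m (ones R T)^T)) *m g.
Proof. by move=> mu_j; rewrite /preca -scalemxAr scalerA mulVf // scale1r. Qed.

Lemma centering_mul_sum1 (R : realFieldType) T (v : 'cV[R]_T) :
  \sum_t v t 0 = 1 ->
  (1%:M - T%:R^-1 *: (ones R T *m (ones R T)^T)) *m v = v - T%:R^-1 *: ones R T.
Proof.
move=> v1; rewrite mulmxBl mul1mx -scalemxAl -mulmxA.
by rewrite ones_tr_mulmx_sum1 // mulmx1.
Qed.

Section Gradients.
Variables (R : realFieldType) (N T : nat).
Variables (P : 'M[R]_N) (mu : 'cV[R]_N) (Q : 'M[R]_(T, N)).
Variables (V : 'M[R]_N) (A : 'M[R]_(T, N)).
Hypotheses (P1 : forall j, \sum_i P i j = 1) (Q1 : forall k, \sum_t Q t k = 1).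
Hypotheses (A1 : forall k, \sum_t A t k = 1) (mu_sum1 : \sum_i mu i 0 = 1).
Hypotheses (Pmu : P *m mu = mu) (Vmu : V *m mu = mu).
Local Notation pi xs := (\prod_u mu (xs u) 0).

Lemma Expect_gradV :
  Expect P mu Q (gradV V A)
  = (mu_ip mu A A *: (V - mu *m (ones R N)^T)
     - mu_ip mu Q A *: (P - mu *m (ones R N)^T)) *m diag_mx mu^T.
Proof.
rewrite (Expect_sum_dprob (G := fun xs k =>
  (V *m Xmat R xs *m col k A - P *m Xmat R xs *m col k Q)
  *m (Xmat R xs *m col k A)^T)); last first.
  move=> xs k; rewrite /gradV; under [LHS]eq_bigr do rewrite scalerN scalemxAl.
  by rewrite sumrN -mulmx_suml sum_dprob_resid // scalemxAl -mulNmx -scalerN opprB.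
have Acol k : \sum_t (col k A) t 0 = 1 by rewrite sum_colE.
have Qcol k : \sum_t (col k Q) t 0 = 1 by rewrite sum_colE.
under eq_bigr => k _.
  under eq_bigr do rewrite mulmxBl scalerBr.
  rewrite sumrB !Xmat_outer_mean_stat // opprD addrACA subrr add0r.
  rewrite !scalemxAl -mulmxBl scalemxAl.
  over.
rewrite -mulmx_suml mu_ipE mu_ipE; congr (_ *m _).
under eq_bigr do rewrite scalerBr !scalerA.
rewrite sumrB -!scaler_suml.
by congr (_ *: _ - _ *: _); apply: eq_bigr => k _; congr (_ * _);
  apply: eq_bigr => t _; rewrite !mxE.
Qed.

Lemma Expect_grada j :
  Expect P mu Q (fun xs k o => grada V A xs k o j)
  = mu j 0 *: ((mu_ip mu V V - sqnorm mu) *: col j A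
               - (mu_ip mu V P - sqnorm mu) *: col j Q).
Proof.
rewrite (Expect_sum_dprob (G := fun xs k => if k == j then
  (V *m Xmat R xs)^T *m (V *m Xmat R xs *m col k A - P *m Xmat R xs *m col k Q)
  else 0)); last first.
  move=> xs k; rewrite /grada; case: eqP => _; last first.
    by rewrite scaler0; apply: big1 => o _; rewrite scaler0.
  under [LHS]eq_bigr do rewrite scalerN scalemxAr.
  by rewrite sumrN -mulmx_sumr sum_dprob_resid // scalemxAr -mulmxN -scalerN opprB.
rewrite (bigD1 j) //= eqxx [X in _ + X]big1 ?addr0; last first.
  by move=> k /negbTE ->; rewrite big1 ?scaler0 // => xs _; rewrite scaler0.
congr (_ *: _).
have gram_mean (M : 'M[R]_N) (v : 'cV[R]_T) : M *m mu = mu -> \sum_t v t 0 = 1 ->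
    \sum_(xs : {ffun 'I_T -> 'I_N})
      pi xs *: ((V *m Xmat R xs)^T *m (M *m Xmat R xs *m v))
    = sqnorm mu *: ones R T + (mu_ip mu V M - sqnorm mu) *: v.
  move=> Mmu v1.
  rewrite mu_ip_trmx_mulE -(sqnorm_stat Vmu Mmu) -Xmat_gram_mean_mul //.
  by apply: eq_bigr => xs _; rewrite trmx_mul !mulmxA.
under eq_bigr do rewrite mulmxBr scalerBr.
rewrite sumrB !gram_mean ?sum_colE //.
by rewrite opprD addrACA subrr add0r.
Qed.

End Gradients.

Theorem lemmaB8 (R : realFieldType) (N T : nat)
  (P : 'M[R]_N) (mu : 'cV[R]_N) (Q : 'M[R]_(T, N))
  (V : 'M[R]_N) (A : 'M[R]_(T, N))
  (HP0 : forall i j, 0 <= P i j)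
  (HP1 : forall j, \sum_i P i j = 1)
  (Hmu0 : forall i, 0 < mu i 0)
  (Hmu1 : \sum_i mu i 0 = 1)
  (HPmu : P *m mu = mu)
  (HQ0 : forall t k, 0 <= Q t k)
  (HQ1 : forall k, \sum_t Q t k = 1)
  (HV1 : (ones R N)^T *m V = (ones R N)^T)
  (HVmu : V *m mu = mu)
  (HA1 : (ones R T)^T *m A = (ones R N)^T) :
  Expect P mu Q (fun xs k o => precV mu (gradV V A xs k o))
    = mu_ip mu A A *: (V - mu *m (ones R N)^T)
      - mu_ip mu Q A *: (P - mu *m (ones R N)^T)
  /\
  forall j : 'I_N,
    Expect P mu Q (fun xs k o => preca mu j (grada V A xs k o j))
      = (mu_ip mu V V - sqnorm mu) *: (col j A - (T%:R)^-1 *: ones R T)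
        - (mu_ip mu V P - sqnorm mu) *: (col j Q - (T%:R)^-1 *: ones R T).
Proof.
have A1 k : \sum_t A t k = 1 by rewrite -ones_tr_mulmxE HA1 !mxE.
have onesP : (ones R N)^T *m P = (ones R N)^T.
  by apply/rowP => j; rewrite ones_tr_mulmxE HP1 !mxE.
have mu_neq0 i : mu i 0 != 0 by rewrite gt_eqF.
split.
  rewrite Expect_linear; last exact: precV_linear.
  rewrite Expect_gradV // precV_centered //.
    by rewrite mulmxBr -!scalemxAr !ones_tr_mul_centered // !scaler0 subrr.
  by rewrite mulmxBl -!scalemxAl !centered_mul_mu // !scaler0 subrr.
move=> j; rewrite Expect_linear; last exact: preca_linear.
rewrite Expect_grada // preca_scale_mu //.
by rewrite mulmxBr -!scalemxAr !centering_mul_sum1 ?sum_colE.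
Qed.
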